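(* (i) If $(S,* )$ is a free LD-system, there is no binary operation $\circ$ on $S$ such that $(S,*,\circ)$ is an ALD-system. (ii) A free ALD-system does not satisfy the law $x\circ y = (x*y)\circ x$; in particular it is not an LD-monoid.
   Context: An LD-system is a set with a binary operation $*$ satisfying $x*(y*z)=(x*y)*(x*z)$ (LD). An ALD-system is a set with two binary operations $*,\circ$ satisfying (LD), $x*(y*z)=(x\circ y)*z$ (ALD$_1$) and $x*(y\circ z)=(x*y)\circ(x*z)$ (ALD$_2$). An LD-monoid is an ALD-system in which moreover $\circ$ is associative with a unit and $x\circ y=(x*y)\circ x$ holds. Free LD-systems and free ALD-systems are the free algebras (of some rank $n\ge1$) in the varieties defined by these laws. *)

From mathcomp Require Import all_boot.
Set Implicit Arguments. Unset Strict Implicit. Unset Printing Implicit Defensive.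

Definition LD_law (S : Type) (st : S -> S -> S) : Prop :=
  forall x y z, st x (st y z) = st (st x y) (st x z).

Definition ALD_system (S : Type) (st circ : S -> S -> S) : Prop :=
  [/\ LD_law st,
      (forall x y z, st x (st y z) = st (circ x y) z)
    & (forall x y z, st x (circ y z) = circ (st x y) (st x z))].

Definition LD_monoid (S : Type) (st circ : S -> S -> S) : Prop :=
  [/\ ALD_system st circ,
      (forall x y z, circ x (circ y z) = circ (circ x y) z),
      (exists e, forall x, circ e x = x /\ circ x e = x)
    & (forall x y, circ x y = circ (st x y) x)].

Definition free_LD (n : nat) (S : Type) (st : S -> S -> S) (gen : 'I_n -> S) : Prop :=
  LD_law st /\
  forall (T : Type) (tst : T -> T -> T), LD_law tst ->
  forall g : 'I_n -> T,
    (exists h : S -> T, (forall x y, h (st x y) = tst (h x) (h y)) /\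
                        (forall i, h (gen i) = g i)) /\
    (forall h1 h2 : S -> T,
        (forall x y, h1 (st x y) = tst (h1 x) (h1 y)) -> (forall i, h1 (gen i) = g i) ->
        (forall x y, h2 (st x y) = tst (h2 x) (h2 y)) -> (forall i, h2 (gen i) = g i) ->
        forall x, h1 x = h2 x).

Definition free_ALD (n : nat) (S : Type) (st circ : S -> S -> S) (gen : 'I_n -> S) : Prop :=
  ALD_system st circ /\
  forall (T : Type) (tst tcirc : T -> T -> T), ALD_system tst tcirc ->
  forall g : 'I_n -> T,
    (exists h : S -> T, (forall x y, h (st x y) = tst (h x) (h y)) /\
                        (forall x y, h (circ x y) = tcirc (h x) (h y)) /\
                        (forall i, h (gen i) = g i)) /\
    (forall h1 h2 : S -> T,
        (forall x y, h1 (st x y) = tst (h1 x) (h1 y)) ->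
        (forall x y, h1 (circ x y) = tcirc (h1 x) (h1 y)) -> (forall i, h1 (gen i) = g i) ->
        (forall x y, h2 (st x y) = tst (h2 x) (h2 y)) ->
        (forall x y, h2 (circ x y) = tcirc (h2 x) (h2 y)) -> (forall i, h2 (gen i) = g i) ->
        forall x, h1 x = h2 x).

From mathcomp Require Import all_boot.

Set Implicit Arguments.
Unset Strict Implicit.
Unset Printing Implicit Defensive.

(* Both parts are witnessed by homomorphisms into small structures on nat.
   For (i), x * y := y + 1 is an LD-system; a homomorphism h sends
   x * (x * x) to h x + 2 but (x o x) * x to h x + 1, so (ALD_1) fails.
   For (ii), x * y := y and x o y := x + 1 form an ALD-system in which
   x o y = (x * y) o x reads h x + 1 = h y + 1, refuted by y := x o x. *)

Definition succr (_ y : nat) : nat := y.+1.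
Definition projr (_ y : nat) : nat := y.
Definition succl (x _ : nat) : nat := x.+1.

Lemma LD_succr : LD_law succr.
Proof. by []. Qed.

Lemma ALD_projr_succl : ALD_system projr succl.
Proof. by []. Qed.

Section FreeMorphisms.

Variables (n : nat) (S T : Type) (gen : 'I_n -> S) (g : 'I_n -> T).

Lemma free_LD_morph (st : S -> S -> S) (tst : T -> T -> T) :
  free_LD st gen -> LD_law tst ->
  exists h : S -> T, {morph h : x y / st x y >-> tst x y}.
Proof.
move=> [_ univ] LDtst.
by have [[h [hst _]] _] := univ T tst LDtst g; exists h.
Qed.

Lemma free_ALD_morph (st circ : S -> S -> S) (tst tcirc : T -> T -> T) :
  free_ALD st circ gen -> ALD_system tst tcirc ->
  exists h : S -> T, {morph h : x y / st x y >-> tst x y} /\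
                     {morph h : x y / circ x y >-> tcirc x y}.
Proof.
move=> [_ univ] ALDt.
by have [[h [hst [hcirc _]]] _] := univ T tst tcirc ALDt g; exists h.
Qed.

End FreeMorphisms.

Section NatHomomorphisms.

Variables (S : Type) (st circ : S -> S -> S) (h : S -> nat).

Lemma not_ALD_of_morph_succr (a : S) :
  {morph h : x y / st x y >-> succr x y} -> ~ ALD_system st circ.
Proof.
move=> hst [_ ALD1 _].
by have := congr1 h (ALD1 a a a); rewrite !hst /succr => /succn_inj/esym/n_Sn.
Qed.

Lemma not_circ_conj_law_of_morph_projr_succl (a : S) :
  {morph h : x y / st x y >-> projr x y} ->
  {morph h : x y / circ x y >-> succl x y} ->
  ~ (forall x y, circ x y = circ (st x y) x).
Proof.
move=> hst hcirc conj.
have := congr1 h (conj a (circ a a)).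
by rewrite !hcirc hst hcirc /projr /succl => /succn_inj/n_Sn.
Qed.

End NatHomomorphisms.

Theorem proposition1p5 :
  (forall (n : nat), 0 < n ->
     forall (S : Type) (st : S -> S -> S) (gen : 'I_n -> S),
       free_LD st gen -> ~ exists circ : S -> S -> S, ALD_system st circ) /\
  (forall (n : nat), 0 < n ->
     forall (S : Type) (st circ : S -> S -> S) (gen : 'I_n -> S),
       free_ALD st circ gen ->
       ~ (forall x y, circ x y = circ (st x y) x) /\ ~ LD_monoid st circ).
Proof.
split=> n n_gt0 S.
- move=> st gen freeS [circ].
  have [h hst] := free_LD_morph (fun _ => 0) freeS LD_succr.
  exact: (not_ALD_of_morph_succr (gen (Ordinal n_gt0)) hst).
- move=> st circ gen freeS.
  have [h [hst hcirc]] := free_ALD_morph (fun _ => 0) freeS ALD_projr_succl.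
  have no_conj := not_circ_conj_law_of_morph_projr_succl (gen (Ordinal n_gt0)) hst hcirc.
  by split=> // -[_ _ _ /no_conj].
Qed.
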